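(* Let $g>0$ and consider the one-dimensional shallow water system $$\partial_t h+\partial_x q=0,\qquad \partial_t q+\partial_x\Big(\frac{q^2}{h}+\tfrac12 g h^2\Big)=0,$$ with state $u=(h,q)$, $h>0$, $q=hv$. Let $u_l=(h_l,q_l)$ and $u_r=(h_r,q_r)$ be subcritical states, i.e. $|\mathcal{F}_l|<1$ and $|\mathcal{F}_r|<1$, where $\mathcal{F}=v/\sqrt{gh}$. Then there exists a unique pair of states $u_1^b=(h_1^b,q_1^b)$, $u_2^b=(h_2^b,q_2^b)$ with $h_1^b,h_2^b>0$ such that $$u_1^b\in\mathcal{N}(u_l),\qquad u_2^b\in\mathcal{P}(u_r),\qquad q_1^b=q_2^b,\qquad h_1^b=h_2^b.$$
   Context: This models a junction between one incoming canal (canal 1, initial constant state $u_l$) and one outgoing canal (canal 2, initial constant state $u_r$), with conservation of mass $q_1^b=q_2^b$ and equal water heights $h_1^b=h_2^b$ at the junction. The Froude number of a state $(h,q)$ is $\mathcal{F}=v/\sqrt{gh}=q/(h\sqrt{gh})$; a state is subcritical (fluvial) if $|\mathcal{F}|<1$ and supercritical (torrential) if $|\mathcal{F}|>1$. Riemann problems for the system are solved in the standard (Lax) sense, by a 1-wave and a 2-wave, each an admissible shock or a centered rarefaction (eigenvalues $\lambda_{1,2}=v\mp\sqrt{gh}$). For a state $u_l$, $\mathcal{N}(u_l)$ is the set of states $\hat u$ such that the solution of the Riemann problem with left state $u_l$ (for $x<0$) and right state $\hat u$ (for $x>0$) contains only waves with non-positive speed. For a state $u_r$, $\mathcal{P}(u_r)$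 is the set of states $\tilde u$ such that the solution of the Riemann problem with left state $\tilde u$ and right state $u_r$ contains only waves with non-negative speed. *)

From Stdlib Require Import Reals.
Open Scope R_scope.

Definition state := (R * R)%type.
Definition hh (u : state) : R := fst u.
Definition qq (u : state) : R := snd u.
Definition vel (u : state) : R := qq u / hh u.

Definition cel (g : R) (u : state) : R := sqrt (g * hh u).
Definition lam1 (g : R) (u : state) : R := vel u - cel g u.
Definition lam2 (g : R) (u : state) : R := vel u + cel g u.
Definition froude (g : R) (u : state) : R := vel u / cel g u.
Definition subcritical (g : R) (u : state) : Prop := Rabs (froude g u) < 1.

Definition flux1 (u : state) : R := qq u.
Definition flux2 (g : R) (u : state) : R := qq u ^ 2 / hh u + g * hh u ^ 2 / 2.

Definition rankine_hugoniot (g : R) (a b : state) (s : R) : Prop :=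
  s * (hh b - hh a) = flux1 b - flux1 a /\
  s * (qq b - qq a) = flux2 g b - flux2 g a.

(* Lax-admissible 1-shock / 2-shock of speed s from a (left) to b (right). *)
Definition shock1 (g : R) (a b : state) (s : R) : Prop :=
  rankine_hugoniot g a b s /\
  lam1 g b < s < lam1 g a /\ s < lam2 g b.
Definition shock2 (g : R) (a b : state) (s : R) : Prop :=
  rankine_hugoniot g a b s /\
  lam2 g b < s < lam2 g a /\ lam1 g a < s.

(* Centered 1-rarefaction / 2-rarefaction from a (left) to b (right):
   b lies on the integral curve of the k-th eigenvector through a
   (the corresponding Riemann invariant v + 2c, resp. v - 2c, is constant)
   and the k-th eigenvalue increases from a to b. The wave fan occupies
   the speeds [lam_k a, lam_k b]. *)
Definition rare1 (g : R) (a b : state) : Prop :=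
  vel b + 2 * cel g b = vel a + 2 * cel g a /\ lam1 g a < lam1 g b.
Definition rare2 (g : R) (a b : state) : Prop :=
  vel b - 2 * cel g b = vel a - 2 * cel g a /\ lam2 g a < lam2 g b.

Definition wave1_nonpos (g : R) (a b : state) : Prop :=
  b = a \/ (exists s, shock1 g a b s /\ s <= 0) \/ (rare1 g a b /\ lam1 g b <= 0).
Definition wave2_nonpos (g : R) (a b : state) : Prop :=
  b = a \/ (exists s, shock2 g a b s /\ s <= 0) \/ (rare2 g a b /\ lam2 g b <= 0).

Definition wave1_nonneg (g : R) (a b : state) : Prop :=
  b = a \/ (exists s, shock1 g a b s /\ 0 <= s) \/ (rare1 g a b /\ 0 <= lam1 g a).
Definition wave2_nonneg (g : R) (a b : state) : Prop :=
  b = a \/ (exists s, shock2 g a b s /\ 0 <= s) \/ (rare2 g a b /\ 0 <= lam2 g a).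

(* N(ul): states uh such that the (Lax) solution of the Riemann problem (ul, uh),
   consisting of a 1-wave ul -> um followed by a 2-wave um -> uh, has only
   waves of non-positive speed. *)
Definition N_set (g : R) (ul uh : state) : Prop :=
  exists um : state, 0 < hh um /\ wave1_nonpos g ul um /\ wave2_nonpos g um uh.

(* P(ur): states ut such that the solution of the Riemann problem (ut, ur)
   has only waves of non-negative speed. *)
Definition P_set (g : R) (ur ut : state) : Prop :=
  exists um : state, 0 < hh um /\ wave1_nonneg g ut um /\ wave2_nonneg g um ur.

Definition junction_ok (g : R) (ul ur u1 u2 : state) : Prop :=
  0 < hh u1 /\ 0 < hh u2 /\
  N_set g ul u1 /\ P_set g ur u2 /\ qq u1 = qq u2 /\ hh u1 = hh u2.

From Stdlib Require Import Reals Lra.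
Open Scope R_scope.

(* In the coordinates (c, v) with c = sqrt (g h), the states reachable from u_l by one
   admissible 1-wave form the graph of a continuous, strictly decreasing function of c
   (rarefactions for c < c_l, Lax shocks for c > c_l); by the reflection x |-> -x, the
   states from which u_r is reached by one 2-wave form the graph of a strictly increasing
   function.  For subcritical data the two graphs cross at exactly one state p.  The waves
   of N(u_l) and P(u_r) adjacent to a boundary state u cannot both be nontrivial, since one
   ends with lambda_2 <= 0 and the other starts with lambda_1 >= 0 at u; hence u = p when
   lambda_1 p <= 0 <= lambda_2 p, and otherwise u is the sonic state of the 1-rarefaction
   from u_l to p (if lambda_1 p > 0) or of the 2-rarefaction from p to u_r
   (if lambda_2 p < 0).  Conversely each of these states solves the junction problem. *)

Definition shock_drop (k c : R) : R := (c ^ 2 - k ^ 2) * sqrt ((k ^ 2 + c ^ 2) / 2) / (k * c).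

(* The forward 1-wave curve through the state of celerity [k] and velocity [w], as
   velocity against celerity: rarefactions for [c <= k], shocks for [k <= c].  [Rmin] and
   [Rmax] glue the two branches into one continuous expression. *)
Definition lax_curve (k w c : R) : R := w + 2 * (k - Rmin k c) - shock_drop k (Rmax k c).

Lemma sqrt_mean_bounds k c : 0 < k -> k <= c ->
  k <= sqrt ((k ^ 2 + c ^ 2) / 2) <= c.
Proof.
  intros Hk Hkc.
  pose proof (sqrt_pos ((k ^ 2 + c ^ 2) / 2)).
  pose proof (sqrt_sqrt ((k ^ 2 + c ^ 2) / 2) ltac:(nra)).
  split; nra.
Qed.

Lemma shock_drop_ge k c : 0 < k -> k <= c -> c - k <= shock_drop k c.
Proof.
  intros Hk Hkc. destruct (sqrt_mean_bounds k c Hk Hkc) as [Hr _].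
  unfold shock_drop. set (r := sqrt _) in *.
  apply (Rmult_le_reg_r (k * c)); [nra|].
  replace ((c ^ 2 - k ^ 2) * r / (k * c) * (k * c)) with ((c - k) * ((c + k) * r)) by (field; nra).
  assert (k * c <= (c + k) * r) by nra. nra.
Qed.

Lemma shock_drop_increasing k c c' : 0 < k -> k <= c -> c < c' ->
  shock_drop k c < shock_drop k c'.
Proof.
  intros Hk Hkc Hcc.
  destruct (sqrt_mean_bounds k c Hk Hkc) as [Hr _].
  assert (Hr' : sqrt ((k ^ 2 + c ^ 2) / 2) <= sqrt ((k ^ 2 + c' ^ 2) / 2))
    by (apply sqrt_le_1_alt; nra).
  unfold shock_drop. set (r := sqrt ((k ^ 2 + c ^ 2) / 2)) in *.
  set (r' := sqrt ((k ^ 2 + c' ^ 2) / 2)) in *.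
  assert (Ha : (c ^ 2 - k ^ 2) / (k * c) < (c' ^ 2 - k ^ 2) / (k * c')).
  { assert (0 < k * c * c') by (repeat apply Rmult_lt_0_compat; lra).
    apply (Rmult_lt_reg_r (k * c * c')); [lra|].
    replace ((c ^ 2 - k ^ 2) / (k * c) * (k * c * c')) with ((c ^ 2 - k ^ 2) * c')
      by (field; nra).
    replace ((c' ^ 2 - k ^ 2) / (k * c') * (k * c * c')) with ((c' ^ 2 - k ^ 2) * c)
      by (field; nra).
    assert (0 < (c' - c) * (c * c' + k ^ 2)) by (apply Rmult_lt_0_compat; nra).
    nra. }
  assert (H0 : 0 <= (c ^ 2 - k ^ 2) / (k * c)).
  { apply Rmult_le_pos; [nra|]. left; apply Rinv_0_lt_compat; nra. }
  replace ((c ^ 2 - k ^ 2) * r / (k * c)) with ((c ^ 2 - k ^ 2) / (k * c) * r)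
    by (field; nra).
  replace ((c' ^ 2 - k ^ 2) * r' / (k * c')) with ((c' ^ 2 - k ^ 2) / (k * c') * r')
    by (field; nra).
  nra.
Qed.

Lemma lax_curve_rarefaction k w c : 0 < k -> c <= k -> lax_curve k w c = w + 2 * (k - c).
Proof.
  intros Hk Hc. unfold lax_curve, shock_drop.
  rewrite Rmin_right, Rmax_left by lra. field; lra.
Qed.

Lemma lax_curve_shock k w c : k <= c -> lax_curve k w c = w - shock_drop k c.
Proof. intros Hc. unfold lax_curve. rewrite Rmin_left, Rmax_right by lra. ring. Qed.

Lemma lax_curve_decreasing k w c c' : 0 < k -> c < c' -> lax_curve k w c' < lax_curve k w c.
Proof.
  intros Hk Hcc.
  destruct (Rle_or_lt c' k) as [Hc'|Hc'].
  - rewrite !lax_curve_rarefaction by lra. lra.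
  - rewrite (lax_curve_shock k w c') by lra.
    destruct (Rle_or_lt c k) as [Hc|Hc].
    + rewrite lax_curve_rarefaction by lra.
      pose proof (shock_drop_ge k c' Hk ltac:(lra)). lra.
    + rewrite lax_curve_shock by lra.
      pose proof (shock_drop_increasing k c c' Hk ltac:(lra) Hcc). lra.
Qed.

Lemma lax_curve_le k w c : 0 < k -> 0 <= c -> lax_curve k w c <= w + 2 * k - c.
Proof.
  intros Hk Hc. destruct (Rle_or_lt c k) as [Hck|Hck].
  - rewrite lax_curve_rarefaction by lra. lra.
  - rewrite lax_curve_shock by lra. pose proof (shock_drop_ge k c Hk ltac:(lra)). lra.
Qed.

Lemma Rmin_abs x y : Rmin x y = (x + y - Rabs (x - y)) / 2.
Proof.
  unfold Rmin. destruct (Rle_dec x y).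
  - rewrite Rabs_left1 by lra. lra.
  - rewrite Rabs_right by lra. lra.
Qed.

Lemma Rmax_abs x y : Rmax x y = (x + y + Rabs (x - y)) / 2.
Proof.
  unfold Rmax. destruct (Rle_dec x y).
  - rewrite Rabs_left1 by lra. lra.
  - rewrite Rabs_right by lra. lra.
Qed.

Lemma lax_curve_continuous k w : 0 < k -> continuity (lax_curve k w).
Proof.
  intros Hk x.
  apply (continuity_pt_locally_ext
    (fun c => w + 2 * (k - (k + c - Rabs (k - c)) / 2)
              - shock_drop k ((k + c + Rabs (k - c)) / 2)) _ 1); [lra| |].
  - intros y _. unfold lax_curve. rewrite Rmin_abs, Rmax_abs. reflexivity.
  - assert (Hm : k <= (k + x + Rabs (k - x)) / 2) by (pose proof (Rle_abs (k - x)); lra).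
    unfold shock_drop. reg.
    + nra.
    + apply Rmult_integral_contrapositive_currified; lra.
Qed.

Lemma lax_curves_cross kl wl kr wr : 0 < kl -> 0 < kr -> wr - wl < 2 * (kl + kr) ->
  exists c, 0 < c /\ lax_curve kl wl c = - lax_curve kr (- wr) c.
Proof.
  intros Hkl Hkr Hw.
  set (f c := - lax_curve kl wl c - lax_curve kr (- wr) c).
  set (M := kl + kr + Rabs (wl - wr) + 1).
  pose proof (Rle_abs (wl - wr)). pose proof (Rabs_pos (wl - wr)).
  assert (Hf0 : f 0 < 0).
  { unfold f. rewrite !lax_curve_rarefaction by lra. lra. }
  assert (HfM : 0 < f M).
  { unfold f. pose proof (lax_curve_le kl wl M Hkl ltac:(unfold M; lra)).
    pose proof (lax_curve_le kr (- wr) M Hkr ltac:(unfold M; lra)). unfold M in *. lra. }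
  destruct (IVT f 0 M) as [c [Hc Hfc]].
  - intros x. unfold f. reg; apply lax_curve_continuous; assumption.
  - unfold M; lra.
  - exact Hf0.
  - exact HfM.
  - exists c. split.
    + destruct Hc as [[Hc|Hc] _]; [assumption|]. subst c. lra.
    + unfold f in Hfc. lra.
Qed.

Section ShallowWater.

Variable g : R.
Hypothesis g_pos : 0 < g.

Definition of_cel_vel (c v : R) : state := (c ^ 2 / g, c ^ 2 / g * v).

Lemma hh_of_cel_vel c v : 0 < c -> 0 < hh (of_cel_vel c v).
Proof. intros Hc. unfold hh, of_cel_vel; cbn [fst snd]. apply Rdiv_lt_0_compat; nra. Qed.

Lemma vel_of_cel_vel c v : 0 < c -> vel (of_cel_vel c v) = v.
Proof. intros Hc. unfold vel, hh, qq, of_cel_vel; cbn [fst snd]. field; split; nra. Qed.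

Lemma cel_of_cel_vel c v : 0 < c -> cel g (of_cel_vel c v) = c.
Proof.
  intros Hc. unfold cel, hh, of_cel_vel; cbn [fst snd].
  replace (g * (c ^ 2 / g)) with (c ^ 2) by (field; lra). apply sqrt_pow2; lra.
Qed.

Lemma lam1_of_cel_vel c v : 0 < c -> lam1 g (of_cel_vel c v) = v - c.
Proof. intros Hc. unfold lam1. rewrite vel_of_cel_vel, cel_of_cel_vel by exact Hc. reflexivity. Qed.

Lemma lam2_of_cel_vel c v : 0 < c -> lam2 g (of_cel_vel c v) = v + c.
Proof. intros Hc. unfold lam2. rewrite vel_of_cel_vel, cel_of_cel_vel by exact Hc. reflexivity. Qed.

Lemma of_cel_vel_inj c v k w : 0 < c -> 0 < k ->
  of_cel_vel c v = of_cel_vel k w -> c = k /\ v = w.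
Proof.
  intros Hc Hk E. split.
  - rewrite <- (cel_of_cel_vel c v), <- (cel_of_cel_vel k w), E by assumption. reflexivity.
  - rewrite <- (vel_of_cel_vel c v), <- (vel_of_cel_vel k w), E by assumption. reflexivity.
Qed.

Lemma cel_pos u : 0 < hh u -> 0 < cel g u.
Proof. intros Hu. apply sqrt_lt_R0. nra. Qed.

Lemma of_cel_vel_cel_vel u : 0 < hh u -> of_cel_vel (cel g u) (vel u) = u.
Proof.
  intros Hu. destruct u as [h q]. unfold of_cel_vel, cel, vel, hh, qq in *; cbn [fst snd] in *.
  rewrite pow2_sqrt by nra. f_equal; field; lra.
Qed.

Lemma state_eq_cel_vel u u' : 0 < hh u -> 0 < hh u' ->
  cel g u = cel g u' -> vel u = vel u' -> u = u'.
Proof.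
  intros Hu Hu' Hc Hv.
  rewrite <- (of_cel_vel_cel_vel u), <- (of_cel_vel_cel_vel u'), Hc, Hv by assumption.
  reflexivity.
Qed.

Lemma lam1_lt_lam2 u : 0 < hh u -> lam1 g u < lam2 g u.
Proof. intros Hu. pose proof (cel_pos u Hu). unfold lam1, lam2. lra. Qed.

Lemma subcritical_lam u : 0 < hh u -> subcritical g u -> lam1 g u < 0 < lam2 g u.
Proof.
  intros Hu Hs. pose proof (cel_pos u Hu) as Hc.
  unfold subcritical, froude in Hs. apply Rabs_def2 in Hs.
  unfold lam1, lam2.
  replace (vel u) with (vel u / cel g u * cel g u) by (field; lra).
  split; nra.
Qed.

Definition mirror (u : state) : state := (hh u, - qq u).

Lemma mirrorK u : mirror (mirror u) = u.
Proof. destruct u as [h q]. unfold mirror, hh, qq; cbn [fst snd]. f_equal; ring. Qed.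

Lemma mirror_inj u u' : mirror u = mirror u' -> u = u'.
Proof. intros E. rewrite <- (mirrorK u), <- (mirrorK u'), E. reflexivity. Qed.

Lemma hh_mirror u : hh (mirror u) = hh u.
Proof. reflexivity. Qed.

Lemma cel_mirror u : cel g (mirror u) = cel g u.
Proof. reflexivity. Qed.

Lemma vel_mirror u : vel (mirror u) = - vel u.
Proof. unfold vel, mirror, hh, qq; cbn [fst snd]. unfold Rdiv. ring. Qed.

Lemma lam1_mirror u : lam1 g (mirror u) = - lam2 g u.
Proof. unfold lam1, lam2. rewrite vel_mirror. unfold cel, mirror, hh; cbn [fst snd]. ring. Qed.

Lemma lam2_mirror u : lam2 g (mirror u) = - lam1 g u.
Proof. unfold lam1, lam2. rewrite vel_mirror. unfold cel, mirror, hh; cbn [fst snd]. ring. Qed.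

Lemma rankine_hugoniot_mirror a b s :
  rankine_hugoniot g (mirror b) (mirror a) (- s) <-> rankine_hugoniot g a b s.
Proof.
  unfold rankine_hugoniot, flux1, flux2, mirror, hh, qq; cbn [fst snd].
  replace ((- snd a) ^ 2) with (snd a ^ 2) by ring.
  replace ((- snd b) ^ 2) with (snd b ^ 2) by ring.
  split; intros [E1 E2]; split; lra.
Qed.

Lemma shock2_mirror a b s : shock2 g a b s <-> shock1 g (mirror b) (mirror a) (- s).
Proof.
  unfold shock1, shock2. rewrite rankine_hugoniot_mirror, !lam1_mirror, !lam2_mirror.
  split; intros [RH L]; split; auto; lra.
Qed.

Lemma rare2_mirror a b : rare2 g a b <-> rare1 g (mirror b) (mirror a).
Proof.
  unfold rare1, rare2. rewrite !lam1_mirror, !vel_mirror.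
  unfold cel, mirror, hh; cbn [fst snd]. split; intros [E L]; split; lra.
Qed.

Definition wave1 (a b : state) : Prop := b = a \/ rare1 g a b \/ exists s, shock1 g a b s.
Definition wave2 (a b : state) : Prop := b = a \/ rare2 g a b \/ exists s, shock2 g a b s.

Lemma wave2_mirror a b : wave2 a b <-> wave1 (mirror b) (mirror a).
Proof.
  unfold wave1, wave2. setoid_rewrite shock2_mirror. rewrite rare2_mirror.
  split; intros [E | [R | [s S]]].
  - left. congruence.
  - right; left; assumption.
  - right; right; exists (- s); assumption.
  - left. symmetry. apply mirror_inj. assumption.
  - right; left; assumption.
  - right; right; exists (- s). rewrite Ropp_involutive. assumption.
Qed.

(* [k ^ 2 * (w - s)] is [g] times the mass flux through the discontinuity. *)
Lemma rankine_hugoniot_of_cel_vel k w c v s : 0 < k -> 0 < c ->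
  rankine_hugoniot g (of_cel_vel k w) (of_cel_vel c v) s <->
  k ^ 2 * (w - s) = c ^ 2 * (v - s) /\
  (c ^ 2 - k ^ 2) * (k ^ 2 * c ^ 2 * (k ^ 2 + c ^ 2) / 2 - (k ^ 2 * (w - s)) ^ 2) = 0.
Proof.
  intros Hk Hc.
  assert (Hk2 : 0 < k ^ 2) by nra. assert (Hc2 : 0 < c ^ 2) by nra.
  assert (Hd : 0 < g * k ^ 2 * c ^ 2) by (repeat apply Rmult_lt_0_compat; lra).
  unfold rankine_hugoniot, flux1, flux2, of_cel_vel, hh, qq; cbn [fst snd].
  set (m := k ^ 2 * (w - s)).
  assert (Emass : c ^ 2 / g * v - k ^ 2 / g * w - s * (c ^ 2 / g - k ^ 2 / g)
                  = (c ^ 2 * (v - s) - m) / g) by (unfold m; field; lra).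
  assert (Emom : m = c ^ 2 * (v - s) ->
     (c ^ 2 / g * v) ^ 2 / (c ^ 2 / g) + g * (c ^ 2 / g) ^ 2 / 2
     - ((k ^ 2 / g * w) ^ 2 / (k ^ 2 / g) + g * (k ^ 2 / g) ^ 2 / 2)
     - s * (c ^ 2 / g * v - k ^ 2 / g * w)
     = (c ^ 2 - k ^ 2) * (k ^ 2 * c ^ 2 * (k ^ 2 + c ^ 2) / 2 - m ^ 2) / (g * k ^ 2 * c ^ 2)).
  { intros Ev.
    replace v with (s + m / c ^ 2) by (rewrite Ev; field; lra).
    replace w with (s + m / k ^ 2) by (unfold m; field; lra).
    field. repeat split; lra. }
  split.
  - intros [E1 E2].
    assert (A1 : m = c ^ 2 * (v - s)).
    { rewrite E1, Rminus_diag in Emass. unfold Rdiv in Emass. symmetry in Emass.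
      apply Rmult_integral in Emass as [H | H]; [lra|].
      exfalso. revert H. apply Rinv_neq_0_compat. lra. }
    split; [exact A1|].
    specialize (Emom A1). rewrite E2, Rminus_diag in Emom. unfold Rdiv in Emom. symmetry in Emom.
    apply Rmult_integral in Emom as [H | H]; [exact H|].
    exfalso. revert H. apply Rinv_neq_0_compat. lra.
  - intros [A1 A2]. split.
    + symmetry. apply Rminus_diag_uniq. rewrite Emass, A1. unfold Rdiv. ring.
    + symmetry. apply Rminus_diag_uniq. rewrite (Emom A1), A2. unfold Rdiv. ring.
Qed.

Lemma shock1_of_cel_vel_eq k w c v s : 0 < k -> 0 < c ->
  shock1 g (of_cel_vel k w) (of_cel_vel c v) s -> k < c /\ v = w - shock_drop k c.
Proof.
  intros Hk Hc. unfold shock1. rewrite !lam1_of_cel_vel, lam2_of_cel_vel by assumption.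
  intros [RH [[L1 L2] L3]].
  apply rankine_hugoniot_of_cel_vel in RH as [Emass Emom]; [|assumption..].
  set (m := k ^ 2 * (w - s)) in *.
  (* Lax's condition [s < w - k] makes the flux [m] exceed [k ^ 3]: this rules out
     [c = k], then [c < k], and selects the positive root [m = k c r]. *)
  assert (Hk2 : 0 < k ^ 2) by nra.
  assert (Hm : k ^ 3 < m).
  { unfold m. replace (k ^ 3) with (k ^ 2 * k) by ring. apply Rmult_lt_compat_l; lra. }
  assert (Hkc : c ^ 2 - k ^ 2 <> 0).
  { intros E. assert (c = k) by nra. subst c. assert (v = w) by nra. lra. }
  assert (Hm2 : m ^ 2 = k ^ 2 * c ^ 2 * (k ^ 2 + c ^ 2) / 2).
  { apply Rmult_integral in Emom as [E | E]; [contradiction | lra]. }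
  assert (Hlt : k < c) by (destruct (Rlt_or_le k c); [assumption | nra]).
  split; [exact Hlt|].
  set (r := sqrt ((k ^ 2 + c ^ 2) / 2)).
  assert (Hr2 : r ^ 2 = (k ^ 2 + c ^ 2) / 2) by (apply pow2_sqrt; nra).
  assert (Hr : 0 < r) by (apply sqrt_lt_R0; nra).
  assert (Em : m = k * c * r).
  { assert (Hprod : (m - k * c * r) * (m + k * c * r) = 0) by nra.
    apply Rmult_integral in Hprod as [E | E]; [lra|].
    assert (0 < k * c * r) by (repeat apply Rmult_lt_0_compat; lra).
    pose proof (pow_lt k 3 Hk). lra. }
  unfold shock_drop. fold r.
  replace v with (s + m / c ^ 2) by (rewrite Emass; field; lra).
  replace w with (s + m / k ^ 2) at 1 by (unfold m; field; lra).
  rewrite Em. field. lra.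
Qed.

Lemma shock1_of_cel_vel_exists k w c : 0 < k -> k < c ->
  exists s, shock1 g (of_cel_vel k w) (of_cel_vel c (w - shock_drop k c)) s.
Proof.
  intros Hk Hlt.
  destruct (sqrt_mean_bounds k c Hk (Rlt_le _ _ Hlt)) as [Hrk Hrc].
  set (r := sqrt ((k ^ 2 + c ^ 2) / 2)) in *.
  assert (Hr2 : r ^ 2 = (k ^ 2 + c ^ 2) / 2) by (apply pow2_sqrt; nra).
  set (s := w - c * r / k).
  assert (Ews : w - s = c * r / k) by (unfold s; ring).
  assert (Evs : w - shock_drop k c - s = k * r / c) by (unfold s, shock_drop; fold r; field; lra).
  exists s. unfold shock1.
  rewrite rankine_hugoniot_of_cel_vel, !lam1_of_cel_vel, lam2_of_cel_vel by lra.
  split.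
  - rewrite Ews, Evs. split; [field; lra|].
    replace (k ^ 2 * (c * r / k)) with (k * c * r) by (field; lra).
    replace ((k * c * r) ^ 2) with (k ^ 2 * c ^ 2 * r ^ 2) by ring.
    rewrite Hr2. field.
  - assert (k < c * r / k).
    { apply (Rmult_lt_reg_r k); [lra|]. replace (c * r / k * k) with (c * r) by (field; lra). nra. }
    assert (k * r / c < c).
    { apply (Rmult_lt_reg_r c); [lra|]. replace (k * r / c * c) with (k * r) by (field; lra). nra. }
    assert (0 < k * r / c) by (apply Rdiv_lt_0_compat; nra).
    lra.
Qed.

Lemma rare1_of_cel_vel k w c v : 0 < k -> 0 < c ->
  rare1 g (of_cel_vel k w) (of_cel_vel c v) <-> c < k /\ v = w + 2 * (k - c).
Proof.
  intros Hk Hc. unfold rare1.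
  rewrite !lam1_of_cel_vel, !vel_of_cel_vel, !cel_of_cel_vel by assumption.
  split; intros [E L]; split; lra.
Qed.

Lemma wave1_iff_lax_curve a b : 0 < hh a -> 0 < hh b ->
  wave1 a b <-> vel b = lax_curve (cel g a) (vel a) (cel g b).
Proof.
  intros Ha Hb. pose proof (cel_pos a Ha) as Hk. pose proof (cel_pos b Hb) as Hc.
  rewrite <- (of_cel_vel_cel_vel a Ha) at 1. rewrite <- (of_cel_vel_cel_vel b Hb) at 1.
  set (k := cel g a) in *. set (w := vel a). set (c := cel g b) in *. set (v := vel b).
  unfold wave1. rewrite rare1_of_cel_vel by assumption.
  split.
  - intros [E | [[Hck Hv] | [s S]]].
    + apply of_cel_vel_inj in E as [-> ->]; [|assumption..].
      rewrite lax_curve_rarefaction by lra. ring.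
    + rewrite lax_curve_rarefaction by lra. exact Hv.
    + apply shock1_of_cel_vel_eq in S as [Hkc Hv]; [|assumption..].
      rewrite lax_curve_shock by lra. exact Hv.
  - intros Hv. destruct (total_order_T c k) as [[Hck | <-] | Hkc].
    + right; left. rewrite lax_curve_rarefaction in Hv by lra. split; assumption.
    + left. rewrite lax_curve_rarefaction in Hv by lra. rewrite Hv. f_equal. ring.
    + right; right. rewrite lax_curve_shock in Hv by lra. rewrite Hv.
      apply shock1_of_cel_vel_exists; assumption.
Qed.

Lemma wave2_iff_lax_curve a b : 0 < hh a -> 0 < hh b ->
  wave2 a b <-> - vel a = lax_curve (cel g b) (- vel b) (cel g a).
Proof.
  intros Ha Hb. rewrite wave2_mirror, wave1_iff_lax_curve by (rewrite hh_mirror; assumption).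
  rewrite !vel_mirror, !cel_mirror. reflexivity.
Qed.

Lemma rare1_trans a b c : rare1 g a b -> rare1 g b c -> rare1 g a c.
Proof. unfold rare1. intros [E1 L1] [E2 L2]. split; lra. Qed.

Lemma rare2_trans a b c : rare2 g a b -> rare2 g b c -> rare2 g a c.
Proof. unfold rare2. intros [E1 L1] [E2 L2]. split; lra. Qed.

Lemma wave1_rare1 a b : lam1 g a < lam1 g b -> wave1 a b -> rare1 g a b.
Proof. intros L [-> | [R | [s (_ & [L1 L2] & _)]]]; [lra | exact R | lra]. Qed.

Lemma wave2_rare2 a b : lam2 g a < lam2 g b -> wave2 a b -> rare2 g a b.
Proof. intros L [-> | [R | [s (_ & [L1 L2] & _)]]]; [lra | exact R | lra]. Qed.

Lemma wave1_nonpos_of_wave1 a b : lam1 g a < 0 -> lam1 g b <= 0 -> wave1 a b -> wave1_nonpos g a b.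
Proof.
  intros La Lb [E | [R | [s S]]].
  - left; exact E.
  - right; right; split; assumption.
  - right; left. exists s. split; [exact S|]. destruct S as (_ & [_ L] & _). lra.
Qed.

Lemma wave2_nonneg_of_wave2 a b : 0 <= lam2 g a -> 0 < lam2 g b -> wave2 a b -> wave2_nonneg g a b.
Proof.
  intros La Lb [E | [R | [s S]]].
  - left; exact E.
  - right; right; split; assumption.
  - right; left. exists s. split; [exact S|]. destruct S as (_ & [L _] & _). lra.
Qed.

Lemma wave1_of_wave1_nonpos a b : lam1 g a < 0 -> wave1_nonpos g a b ->
  wave1 a b /\ (lam1 g b < 0 \/ rare1 g a b /\ lam1 g b = 0).
Proof.
  intros La [-> | [[s [S Ls]] | [R Lb]]].
  - split; [left|left]; auto.
  - split; [right; right; exists s; exact S|]. destruct S as (_ & [L _] & _). lra.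
  - split; [right; left; exact R|]. destruct (Rle_lt_or_eq _ _ Lb); auto.
Qed.

Lemma wave2_of_wave2_nonneg a b : 0 < lam2 g b -> wave2_nonneg g a b ->
  wave2 a b /\ (0 < lam2 g a \/ rare2 g a b /\ lam2 g a = 0).
Proof.
  intros Lb [-> | [[s [S Ls]] | [R La]]].
  - split; [left|left]; auto.
  - split; [right; right; exists s; exact S|]. destruct S as (_ & [_ L] & _). lra.
  - split; [right; left; exact R|]. destruct (Rle_lt_or_eq _ _ La); auto.
Qed.

Lemma wave1_nonneg_cases a b : wave1_nonneg g a b ->
  b = a \/ 0 < lam1 g a \/ rare1 g a b /\ 0 <= lam1 g a.
Proof. intros [E | [[s [(_ & [L1 L2] & _) Ls]] | R]]; auto. right; left; lra. Qed.

Lemma wave2_nonpos_cases a b : wave2_nonpos g a b ->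
  b = a \/ lam2 g b < 0 \/ rare2 g a b /\ lam2 g b <= 0.
Proof. intros [E | [[s [(_ & [L1 L2] & _) Ls]] | R]]; auto. right; left; lra. Qed.

Lemma rare1_sonic a b : rare1 g a b -> lam1 g a < 0 < lam1 g b ->
  exists u, 0 < hh u /\ rare1 g a u /\ rare1 g u b /\ lam1 g u = 0.
Proof.
  unfold rare1. intros [E Lab] [La Lb].
  set (c := (vel a + 2 * cel g a) / 3).
  assert (Hc : 0 < c) by (pose proof (sqrt_pos (g * hh b)); unfold c, lam1, cel in *; lra).
  exists (of_cel_vel c c).
  rewrite lam1_of_cel_vel, vel_of_cel_vel, cel_of_cel_vel by exact Hc.
  split; [apply hh_of_cel_vel; exact Hc|]. unfold c. repeat split; lra.
Qed.

Lemma rare2_sonic a b : rare2 g a b -> lam2 g a < 0 < lam2 g b ->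
  exists u, 0 < hh u /\ rare2 g a u /\ rare2 g u b /\ lam2 g u = 0.
Proof.
  rewrite rare2_mirror. intros R [La Lb].
  destruct (rare1_sonic _ _ R) as (u & Hu & R1 & R2 & L); [rewrite !lam1_mirror; lra|].
  exists (mirror u). rewrite !rare2_mirror, lam2_mirror, mirrorK, hh_mirror.
  split; [assumption|]. split; [assumption|]. split; [assumption | lra].
Qed.

Lemma rare1_sonic_unique a u u' : 0 < hh u -> 0 < hh u' ->
  rare1 g a u -> rare1 g a u' -> lam1 g u = 0 -> lam1 g u' = 0 -> u' = u.
Proof.
  unfold rare1, lam1. intros Hu Hu' [E _] [E' _] L L'.
  apply state_eq_cel_vel; [assumption.. | lra | lra].
Qed.

Lemma rare2_sonic_unique b u u' : 0 < hh u -> 0 < hh u' ->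
  rare2 g u b -> rare2 g u' b -> lam2 g u = 0 -> lam2 g u' = 0 -> u' = u.
Proof.
  unfold rare2, lam2. intros Hu Hu' [E _] [E' _] L L'.
  apply state_eq_cel_vel; [assumption.. | lra | lra].
Qed.

Section Junction.

Variables ul ur : state.
Hypothesis ul_pos : 0 < hh ul.
Hypothesis ur_pos : 0 < hh ur.
Hypothesis ul_sub : subcritical g ul.
Hypothesis ur_sub : subcritical g ur.

Lemma wave_curves_cross : exists p, 0 < hh p /\ wave1 ul p /\ wave2 p ur.
Proof.
  pose proof (subcritical_lam ul ul_pos ul_sub). pose proof (subcritical_lam ur ur_pos ur_sub).
  unfold lam1, lam2 in *.
  destruct (lax_curves_cross (cel g ul) (vel ul) (cel g ur) (vel ur)) as [c [Hc E]];
    [apply cel_pos; assumption.. | lra |].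
  set (v := lax_curve (cel g ul) (vel ul) c) in *.
  assert (Hp : 0 < hh (of_cel_vel c v)) by (apply hh_of_cel_vel; exact Hc).
  exists (of_cel_vel c v). split; [exact Hp|]. split.
  - apply wave1_iff_lax_curve; [assumption..|].
    rewrite vel_of_cel_vel, cel_of_cel_vel by exact Hc. reflexivity.
  - apply wave2_iff_lax_curve; [assumption..|].
    rewrite vel_of_cel_vel, cel_of_cel_vel by exact Hc. lra.
Qed.

Lemma wave_curves_cross_unique p p' : 0 < hh p -> wave1 ul p -> wave2 p ur ->
  0 < hh p' -> wave1 ul p' -> wave2 p' ur -> p' = p.
Proof.
  intros Hp W1 W2 Hp' W1' W2'.
  rewrite wave1_iff_lax_curve in W1, W1' by assumption.
  rewrite wave2_iff_lax_curve in W2, W2' by assumption.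
  pose proof (cel_pos ul ul_pos). pose proof (cel_pos ur ur_pos).
  destruct (total_order_T (cel g p) (cel g p')) as [[Hlt | Heq] | Hgt].
  - pose proof (lax_curve_decreasing (cel g ul) (vel ul) _ _ ltac:(assumption) Hlt).
    pose proof (lax_curve_decreasing (cel g ur) (- vel ur) _ _ ltac:(assumption) Hlt). lra.
  - apply state_eq_cel_vel; [assumption.. | congruence | congruence].
  - pose proof (lax_curve_decreasing (cel g ul) (vel ul) _ _ ltac:(assumption) Hgt).
    pose proof (lax_curve_decreasing (cel g ur) (- vel ur) _ _ ltac:(assumption) Hgt). lra.
Qed.

Lemma junction_ok_diag u1 u2 : junction_ok g ul ur u1 u2 -> u1 = u2.
Proof.
  destruct u1 as [h1 q1], u2 as [h2 q2]. unfold junction_ok, hh, qq; cbn [fst snd].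
  intros (_ & _ & _ & _ & -> & ->). reflexivity.
Qed.

Lemma junction_cases p u : 0 < hh p -> wave1 ul p -> wave2 p ur -> junction_ok g ul ur u u ->
  u = p /\ lam1 g p <= 0 <= lam2 g p
  \/ 0 < lam1 g p /\ rare1 g ul u /\ lam1 g u = 0
  \/ lam2 g p < 0 /\ rare2 g u ur /\ lam2 g u = 0.
Proof.
  intros Hp W1p W2p (Hu & _ & [um (Hum & N1 & N2)] & [um' (Hum' & P1 & P2)] & _).
  destruct (subcritical_lam ul ul_pos ul_sub) as [Ll _].
  destruct (subcritical_lam ur ur_pos ur_sub) as [_ Lr].
  destruct (wave1_of_wave1_nonpos ul um Ll N1) as [W1m Lm].
  destruct (wave2_of_wave2_nonneg um' ur Lr P2) as [W2m Lm'].
  pose proof (lam1_lt_lam2 u Hu).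
  destruct (wave2_nonpos_cases um u N2) as [<- | [L2u | [R2 L2u]]];
    destruct (wave1_nonneg_cases u um' P1) as [-> | [L1u | [R1 L1u]]];
    try lra.
  - left. assert (u = p) as -> by (apply (wave_curves_cross_unique p u); assumption).
    split; [reflexivity|]. lra.
  - right; left. destruct Lm as [Lm | [Rl Lu]]; [lra|].
    assert (um' = p) as -> by (apply (wave_curves_cross_unique p um'); try assumption;
                               right; left; apply (rare1_trans _ u); assumption).
    destruct R1 as [_ L]. split; [lra | split; assumption].
  - right; right. destruct Lm' as [Lm' | [Rr Lu]]; [lra|].
    assert (um = p) as -> by (apply (wave_curves_cross_unique p um); try assumption;
                              right; left; apply (rare2_trans _ u); assumption).
    destruct R2 as [_ L]. split; [lra | split; assumption].
Qed.

Lemma junction_unique p u u' : 0 < hh p -> wave1 ul p -> wave2 p ur ->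
  junction_ok g ul ur u u -> junction_ok g ul ur u' u' -> u' = u.
Proof.
  intros Hp W1 W2 J J'.
  pose proof (lam1_lt_lam2 p Hp).
  destruct (junction_cases p u Hp W1 W2 J) as [[-> Lp] | [[Lp [R L]] | [Lp [R L]]]];
    destruct (junction_cases p u' Hp W1 W2 J') as [[-> Lp'] | [[Lp' [R' L']] | [Lp' [R' L']]]];
    try lra.
  - reflexivity.
  - apply (rare1_sonic_unique ul); try assumption; [apply J | apply J'].
  - apply (rare2_sonic_unique ur); try assumption; [apply J | apply J'].
Qed.

Lemma junction_exists p : 0 < hh p -> wave1 ul p -> wave2 p ur ->
  exists u, junction_ok g ul ur u u.
Proof.
  intros Hp W1 W2.
  destruct (subcritical_lam ul ul_pos ul_sub) as [Ll _].
  destruct (subcritical_lam ur ur_pos ur_sub) as [_ Lr].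
  pose proof (lam1_lt_lam2 p Hp).
  enough (exists u, 0 < hh u /\ N_set g ul u /\ P_set g ur u) as (u & Hu & N & P)
    by (exists u; repeat split; assumption).
  destruct (Rlt_or_le 0 (lam1 g p)) as [Lp1 | Lp1];
    [| destruct (Rlt_or_le (lam2 g p) 0) as [Lp2 | Lp2]].
  - destruct (rare1_sonic ul p) as (u & Hu & R1 & R2 & L);
      [apply wave1_rare1; [lra | assumption] | lra |].
    exists u. split; [exact Hu|]. split.
    + exists u. split; [exact Hu|].
      split; [right; right; split; [assumption | lra] | left; reflexivity].
    + exists p. split; [exact Hp|]. split; [right; right; split; [assumption | lra]|].
      apply wave2_nonneg_of_wave2; [lra | assumption..].
  - destruct (rare2_sonic p ur) as (u & Hu & R1 & R2 & L);
      [apply wave2_rare2; [lra | assumption] | lra |].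
    exists u. split; [exact Hu|]. split.
    + exists p. split; [exact Hp|]. split; [apply wave1_nonpos_of_wave1; [lra | lra | assumption]|].
      right; right. split; [assumption | lra].
    + exists u. split; [exact Hu|].
      split; [left; reflexivity | right; right; split; [assumption | lra]].
  - exists p. split; [exact Hp|]. split.
    + exists p. split; [exact Hp|].
      split; [apply wave1_nonpos_of_wave1; assumption | left; reflexivity].
    + exists p. split; [exact Hp|].
      split; [left; reflexivity | apply wave2_nonneg_of_wave2; assumption].
Qed.

End Junction.

End ShallowWater.

Theorem mainTheorem1 (g : R) (ul ur : state) :
  0 < g -> 0 < hh ul -> 0 < hh ur ->
  subcritical g ul -> subcritical g ur ->
  exists u1 u2 : state,
    junction_ok g ul ur u1 u2 /\
    (forall u1' u2' : state, junction_ok g ul ur u1' u2' -> u1' = u1 /\ u2' = u2).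
Proof.
  intros Hg Hl Hr Sl Sr.
  destruct (wave_curves_cross g Hg ul ur Hl Hr Sl Sr) as (p & Hp & W1 & W2).
  destruct (junction_exists g Hg ul ur Hl Hr Sl Sr p Hp W1 W2) as [u Hu].
  exists u, u. split; [exact Hu|].
  intros u1 u2 J.
  assert (u2 = u1) as -> by (symmetry; exact (junction_ok_diag g ul ur u1 u2 J)).
  assert (u1 = u) as -> by exact (junction_unique g Hg ul ur Hl Hr Sl Sr p u u1 Hp W1 W2 Hu J).
  split; reflexivity.
Qed.
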